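(* Let $p,q$ be distributions on $[n]$, $0<\varepsilon\leq1$, and $m_1\geq m_2>0$. Let $S_1$ consist of $\mathrm{Poi}(m_1)$ i.i.d. samples from $p$ and $T_1$ of $\mathrm{Poi}(m_2)$ i.i.d. samples from $q$, independent. Let $b=\frac{256\log n}{\varepsilon^2m_2}$, $b'=\frac{256\log n}{m_2}$, let $X^{S_1}_i,Y^{T_1}_i$ be the numbers of occurrences of $i$ in $S_1,T_1$, and define $B=\{i: X^{S_1}_i/m_1>b\}\cup\{i:Y^{T_1}_i/m_2>b\}$, $M=\{i: b'\leq\max\{X^{S_1}_i/m_1,Y^{T_1}_i/m_2\}\leq b\}$, $H=[n]\setminus(B\cup M)$. Then with probability $1-o(1/n)$ over $S_1,T_1$, the sets $B$, $M$ and $H$ are all faithful.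
   Context: ''Drawing $\mathrm{Poi}(m)$ samples'' means drawing $N\sim\mathrm{Poisson}(m)$ then $N$ i.i.d. samples. $B$ is faithful if every $i\in B$ has $p_i>b/2$ or $q_i>b/2$; $M$ is faithful if every $i\in M$ has $b'/2\leq\max\{p_i,q_i\}\leq2b$; $H$ is faithful if every $i\in H$ has $p_i<2b'$ and $q_i<2b'$. *)

From HB Require Import structures.
From mathcomp Require Import all_boot all_order all_algebra.
From mathcomp Require Import all_classical all_reals all_analysis.
Set Implicit Arguments. Unset Strict Implicit. Unset Printing Implicit Defensive.
Import Order.TTheory GRing.Theory Num.Theory.
Local Open Scope ring_scope.
Local Open Scope classical_set_scope.

Section Defs.
Context {R : realType}.

Definition is_distr (n : nat) (p : 'I_n -> R) : Prop :=
  (forall i, 0 <= p i) /\ \sum_(i < n) p i = 1.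

Definition poisson_pmf (m : R) (k : nat) : R :=
  expR (- m) * m ^+ k / (k`!)%:R.

Definition seq_prob (n k : nat) (p : 'I_n -> R) (s : k.-tuple 'I_n) : R :=
  \prod_(j <- s) p j.

Definition occ (n k : nat) (s : k.-tuple 'I_n) : 'I_n -> nat :=
  fun i => count_mem i s.

(* Probability (as an extended real) of an event E about the occurrence counts
   (X, Y) when S consists of Poi(m1) i.i.d. samples from p and, independently,
   T of Poi(m2) i.i.d. samples from q.  Literally: draw N1 ~ Poi(m1),
   N2 ~ Poi(m2) independently, then sequences S in [n]^N1, T in [n]^N2. *)
Definition prob_poi2 (n : nat) (p q : 'I_n -> R) (m1 m2 : R)
    (E : ('I_n -> nat) -> ('I_n -> nat) -> bool) : \bar R :=
  \esum_(k in [set: nat * nat])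
    (poisson_pmf m1 k.1 * poisson_pmf m2 k.2 *
      \sum_(s : k.1.-tuple 'I_n) \sum_(t : k.2.-tuple 'I_n)
        ((E (occ s) (occ t))%:R * seq_prob p s * seq_prob q t))%:E.

Definition setB (n : nat) (X Y : 'I_n -> nat) (m1 m2 b : R) : {set 'I_n} :=
  [set i | b < (X i)%:R / m1] :|: [set i | b < (Y i)%:R / m2].

Definition setM (n : nat) (X Y : 'I_n -> nat) (m1 m2 b b' : R) : {set 'I_n} :=
  [set i | (b' <= Num.max ((X i)%:R / m1) ((Y i)%:R / m2))
           && (Num.max ((X i)%:R / m1) ((Y i)%:R / m2) <= b)].

Definition setH (n : nat) (X Y : 'I_n -> nat) (m1 m2 b b' : R) : {set 'I_n} :=
  ~: (setB X Y m1 m2 b :|: setM X Y m1 m2 b b').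

Definition faithfulB (n : nat) (p q : 'I_n -> R) (b : R) (B : {set 'I_n}) : bool :=
  [forall i in B, (b / 2 < p i) || (b / 2 < q i)].

Definition faithfulM (n : nat) (p q : 'I_n -> R) (b b' : R) (M : {set 'I_n}) : bool :=
  [forall i in M, (b' / 2 <= Num.max (p i) (q i)) && (Num.max (p i) (q i) <= 2 * b)].

Definition faithfulH (n : nat) (p q : 'I_n -> R) (b' : R) (H : {set 'I_n}) : bool :=
  [forall i in H, (p i < 2 * b') && (q i < 2 * b')].

Definition all_faithful (n : nat) (p q : 'I_n -> R) (eps m1 m2 : R)
    (X Y : 'I_n -> nat) : bool :=
  let b := 256 * ln (n%:R) / (eps ^+ 2 * m2) in
  let b' := 256 * ln (n%:R) / m2 in
  [&& faithfulB p q b (setB X Y m1 m2 b),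
      faithfulM p q b b' (setM X Y m1 m2 b b')
    & faithfulH p q b' (setH X Y m1 m2 b b')].

End Defs.

From Pilot Require Import Defs.
From HB Require Import structures.
From mathcomp Require Import all_boot all_order all_algebra.
From mathcomp Require Import all_classical all_reals all_analysis.
From mathcomp Require Import ring lra.
Import Order.TTheory GRing.Theory Num.Theory.
Import numFieldNormedType.Exports.
Local Open Scope ring_scope.
Local Open Scope classical_set_scope.

Set Implicit Arguments. Unset Strict Implicit. Unset Printing Implicit Defensive.

(* Exponential-moment (Chernoff) method.  Under Poissonised sampling the count
   X_i of symbol i satisfies E[z^X_i] = exp(m p_i (z - 1)).  If one of B, M, H
   is not faithful, then for some i the empirical frequency X_i/m1 or Y_i/m2
   lies on the wrong side of b or b' although p_i or q_i lies on the far side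
   of b/2, 2b, b'/2 or 2b'; on each of these eight events a suitable test
   c z^X_i (or c z^Y_i) is at least 1.  So the failure probability is at most
   the total mean of the tests, and since b m, b' m >= 256 ln n for m = m1, m2,
   each mean is at most exp(-3 ln n) = n^-3.  Summing over the n symbols gives
   8/n^2 = o(1/n). *)

Lemma sum_tuple_cons (V : nmodType) (T : finType) k (F : k.+1.-tuple T -> V) :
  \sum_(s : k.+1.-tuple T) F s = \sum_(x : T) \sum_(s : k.-tuple T) F [tuple of x :: s].
Proof.
rewrite pair_big /= (reindex (fun xs : T * k.-tuple T => [tuple of xs.1 :: xs.2])) //=.
exists (fun t : k.+1.-tuple T => (thead t, [tuple of behead t])).
  by move=> [x s] _ /=; congr (_, _); apply: val_inj.
by move=> t _; case: (tupleP t) => x s /=; apply: val_inj.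
Qed.

Lemma sum_tuple_prod (R : comPzSemiRingType) (T : finType) k (w : T -> R) :
  \sum_(s : k.-tuple T) \prod_(j <- s) w j = (\sum_x w x) ^+ k.
Proof.
elim: k => [|k IH].
  rewrite (big_pred1 [tuple]) ?big_nil ?expr0 // => t.
  by apply/esym/eqP; apply: tuple0.
rewrite sum_tuple_cons exprS big_distrl /=; apply: eq_bigr => x _.
by rewrite -IH big_distrr /=; apply: eq_bigr => s _; rewrite big_cons.
Qed.

Lemma expr_count_mem_prod (R : comPzSemiRingType) (T : eqType) (w : T -> R) i z
    (s : seq T) :
  z ^+ count_mem i s * \prod_(j <- s) w j =
  \prod_(j <- s) (w j * (if j == i then z else 1)).
Proof.
elim: s => [|x s IH]; first by rewrite !big_nil expr0 mul1r.
rewrite /= !big_cons exprD -IH.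
by case: (x == i); rewrite ?expr1 ?expr0; ring.
Qed.

Section Multinomial.
Context {R : realType} {n : nat}.
Implicit Types (p : 'I_n -> R) (F : ('I_n -> nat) -> R).

Definition count_expect k p F : R :=
  \sum_(s : k.-tuple 'I_n) F (occ s) * seq_prob p s.

Lemma distr_bounds p i : is_distr p -> 0 <= p i <= 1.
Proof.
move=> [p0 p1]; rewrite p0 /= -p1 (bigD1 i) //= lerDl.
exact: sumr_ge0.
Qed.

Lemma seq_prob_ge0 k p (s : k.-tuple 'I_n) : is_distr p -> 0 <= seq_prob p s.
Proof. by move=> [p0 _]; apply: prodr_ge0. Qed.

Lemma sum_seq_prob k p : is_distr p -> \sum_(s : k.-tuple 'I_n) seq_prob p s = 1.
Proof. by move=> [_ p1]; rewrite sum_tuple_prod p1 expr1n. Qed.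

Lemma count_expect_ge0 k p F : is_distr p -> (forall X, 0 <= F X) ->
  0 <= count_expect k p F.
Proof. by move=> dp F0; apply: sumr_ge0 => s _; rewrite mulr_ge0 ?seq_prob_ge0. Qed.

Lemma count_expect_sum (I : Type) (r : seq I) (P : pred I) k p
    (F : I -> ('I_n -> nat) -> R) :
  count_expect k p (fun X => \sum_(j <- r | P j) F j X) =
  \sum_(j <- r | P j) count_expect k p (F j).
Proof.
rewrite /count_expect (eq_bigr _ (fun s _ => big_distrl _ _ _)) /=.
exact: exchange_big.
Qed.

Lemma count_expectZ k p c F :
  count_expect k p (fun X => c * F X) = c * count_expect k p F.
Proof. by rewrite /count_expect big_distrr /=; apply: eq_bigr => s _; rewrite mulrA. Qed.

Lemma count_expect_expr k p i z : is_distr p ->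
  count_expect k p (fun X => z ^+ X i) = (1 + p i * (z - 1)) ^+ k.
Proof.
move=> [p0 p1].
have -> : 1 + p i * (z - 1) = \sum_j p j * (if j == i then z else 1).
  rewrite (bigD1 i) //= eqxx (eq_bigr p) => [|j /negPf->]; last by rewrite mulr1.
  by rewrite -{1}p1 (bigD1 i) //=; ring.
by rewrite -sum_tuple_prod; apply: eq_bigr => s _; rewrite expr_count_mem_prod.
Qed.

Lemma sum_samples_le_split k1 k2 (p q : 'I_n -> R)
    (E : ('I_n -> nat) -> ('I_n -> nat) -> bool) (F G : ('I_n -> nat) -> R) :
  is_distr p -> is_distr q -> (forall X Y, (E X Y)%:R <= F X + G Y) ->
  \sum_(s : k1.-tuple 'I_n) \sum_(t : k2.-tuple 'I_n)
    ((E (occ s) (occ t))%:R * seq_prob p s * seq_prob q t)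
  <= count_expect k1 p F + count_expect k2 q G.
Proof.
move=> dp dq hE.
have -> : count_expect k1 p F = count_expect k1 p F * \sum_(t : k2.-tuple 'I_n) seq_prob q t.
  by rewrite sum_seq_prob ?mulr1.
have -> : count_expect k2 q G = count_expect k2 q G * \sum_(s : k1.-tuple 'I_n) seq_prob p s.
  by rewrite sum_seq_prob ?mulr1.
rewrite !big_distrlr /=.
rewrite [X in _ + X]exchange_big -big_split /=; apply: ler_sum => s _.
rewrite -big_split /=; apply: ler_sum => t _.
rewrite -!mulrA [seq_prob q t * _]mulrC -!mulrDl ler_wpM2r ?hE //.
by rewrite mulr_ge0 ?seq_prob_ge0.
Qed.

End Multinomial.

Section PoissonMixture.
Context {R : realType}.
(* Qualified: the analysis library exports its own [poisson_pmf]. *)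
Notation pois := (@Defs.poisson_pmf R).

Lemma poisson_pmf_ge0 m k : 0 <= m -> 0 <= pois m k.
Proof. by move=> m0; rewrite /Defs.poisson_pmf divr_ge0 ?mulr_ge0 ?expR_ge0 ?exprn_ge0. Qed.

Lemma sum_exp_coeff_le (x : R) K : 0 <= x -> \sum_(k < K) x ^+ k / k`!%:R <= expR x.
Proof.
move=> x0; have := nondecreasing_cvgn_le _ (is_cvg_series_exp_coeff x) K.
rewrite /series /= big_mkord; apply.
apply: nondecreasing_series => k _ _.
by rewrite /exp_coeff /= divr_ge0 ?exprn_ge0.
Qed.

Lemma poisson_partial_pgf_le m a K : 0 <= m -> 0 <= a ->
  \sum_(k < K) pois m k * a ^+ k <= expR (m * (a - 1)).
Proof.
move=> m0 a0; rewrite mulrBr mulr1 addrC expRD.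
rewrite (eq_bigr (fun k : 'I_K => expR (- m) * ((m * a) ^+ k / k`!%:R))); last first.
  by move=> k _; rewrite /Defs.poisson_pmf exprMn; ring.
by rewrite -big_distrr /= ler_pM2l ?expR_gt0 // sum_exp_coeff_le ?mulr_ge0.
Qed.

Lemma poisson_partial_le1 m K : 0 <= m -> \sum_(k < K) pois m k <= 1.
Proof.
move=> m0; have := poisson_partial_pgf_le K m0 ler01.
by rewrite subrr mulr0 expR0; under eq_bigr do rewrite expr1n mulr1.
Qed.

Lemma esum_nat_le (h : nat -> R) c : (forall k, 0 <= h k) ->
  (forall K, \sum_(k < K) h k <= c) -> (\esum_(k in [set: nat]) (h k)%:E <= c%:E)%E.
Proof.
move=> h0 hc; rewrite -nneseries_esumT => [|k]; last by rewrite lee_fin.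
apply: lime_le; first by apply: is_cvg_nneseries => k _ _; rewrite lee_fin.
by apply: nearW => K; rewrite sumEFin lee_fin big_mkord.
Qed.

Lemma prob_poi2_le_split n (p q : 'I_n -> R) (m1 m2 : R)
    (E : ('I_n -> nat) -> ('I_n -> nat) -> bool) (F G : ('I_n -> nat) -> R) (A B : R) :
  is_distr p -> is_distr q -> 0 <= m1 -> 0 <= m2 ->
  (forall X, 0 <= F X) -> (forall Y, 0 <= G Y) ->
  (forall X Y, (E X Y)%:R <= F X + G Y) ->
  (forall K, \sum_(k < K) pois m1 k * count_expect k p F <= A) ->
  (forall K, \sum_(k < K) pois m2 k * count_expect k q G <= B) ->
  (prob_poi2 p q m1 m2 E <= (A + B)%:E)%E.
Proof.
move=> dp dq m10 m20 F0 G0 hE hA hB.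
have B0 : 0 <= B by have := hB 0%N; rewrite big_ord0.
set S := fun k1 k2 => \sum_(s : k1.-tuple 'I_n) \sum_(t : k2.-tuple 'I_n)
  ((E (occ s) (occ t))%:R * seq_prob p s * seq_prob q t).
have S0 k1 k2 : 0 <= S k1 k2.
  by apply: sumr_ge0 => s _; apply: sumr_ge0 => t _; rewrite !mulr_ge0 ?seq_prob_ge0.
have h0 k1 k2 : 0 <= pois m1 k1 * pois m2 k2 * S k1 k2.
  by rewrite mulr_ge0 ?S0 // mulr_ge0 // poisson_pmf_ge0.
rewrite /prob_poi2.
have -> : [set: nat * nat] = [set: nat] `*`` (fun _ => [set: nat]).
  by apply/seteqP; split => -[].
rewrite -(esum_esum (a := fun k1 k2 => (pois m1 k1 * pois m2 k2 * S k1 k2)%:E)); last first.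
  by move=> *; rewrite lee_fin.
apply: (@le_trans _ _ (\esum_(k1 in [set: nat])
    (pois m1 k1 * count_expect k1 p F + pois m1 k1 * B)%:E)).
  apply: le_esum => k1 _; apply: esum_nat_le => // K.
  apply: (@le_trans _ _ (pois m1 k1 * (count_expect k1 p F * \sum_(k < K) pois m2 k
      + \sum_(k < K) pois m2 k * count_expect k q G))).
    rewrite big_distrr -big_split big_distrr /=; apply: ler_sum => k _.
    rewrite -mulrA; apply: ler_wpM2l; first exact: poisson_pmf_ge0.
    rewrite [count_expect k1 p F * _]mulrC -mulrDr; apply: ler_wpM2l; first exact: poisson_pmf_ge0.
    exact: sum_samples_le_split.
  rewrite mulrDr lerD ?ler_wpM2l ?poisson_pmf_ge0 // ?hB //.
  by rewrite ler_piMr ?poisson_partial_le1 ?count_expect_ge0.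
apply: esum_nat_le => [k|K].
  by rewrite addr_ge0 ?(mulr_ge0 (poisson_pmf_ge0 _ m10)) ?count_expect_ge0.
rewrite big_split -big_distrl /= lerD ?hA //.
by rewrite ler_piMl ?poisson_partial_le1.
Qed.

End PoissonMixture.

Section ExponentialTests.
Context {R : realType} {n : nat}.
Implicit Types (p : 'I_n -> R) (L : 'I_n -> seq (R * R)).
Notation pois := (@Defs.poisson_pmf R).

Definition exp_tests L (X : 'I_n -> nat) : R :=
  \sum_i \sum_(cz <- L i) cz.1 * cz.2 ^+ X i.

Definition exp_tests_poisson_mean (m : R) p L : R :=
  \sum_i \sum_(cz <- L i) cz.1 * expR (m * (p i * (cz.2 - 1))).

Definition nonneg_tests L := forall i cz, cz \in L i -> 0 <= cz.1 /\ 0 <= cz.2.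

Lemma exp_tests_ge0 L X : nonneg_tests L -> 0 <= exp_tests L X.
Proof.
move=> hL; apply: sumr_ge0 => i _; rewrite big_seq; apply: sumr_ge0 => cz czL.
by have [c0 z0] := hL i cz czL; rewrite mulr_ge0 ?exprn_ge0.
Qed.

Lemma exp_tests_ge_coord L X i : nonneg_tests L ->
  \sum_(cz <- L i) cz.1 * cz.2 ^+ X i <= exp_tests L X.
Proof.
move=> hL; rewrite /exp_tests (bigD1 i) //= lerDl; apply: sumr_ge0 => j _.
rewrite big_seq; apply: sumr_ge0 => cz czL.
by have [c0 z0] := hL j cz czL; rewrite mulr_ge0 ?exprn_ge0.
Qed.

Lemma count_expect_exp_tests k p L : is_distr p ->
  count_expect k p (exp_tests L) =
  \sum_i \sum_(cz <- L i) cz.1 * (1 + p i * (cz.2 - 1)) ^+ k.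
Proof.
move=> dp; rewrite count_expect_sum; apply: eq_bigr => i _.
by rewrite count_expect_sum; apply: eq_bigr => cz _; rewrite count_expectZ count_expect_expr.
Qed.

Lemma poisson_partial_exp_tests_le m p L K :
  0 <= m -> is_distr p -> nonneg_tests L ->
  \sum_(k < K) pois m k * count_expect k p (exp_tests L) <= exp_tests_poisson_mean m p L.
Proof.
move=> m0 dp hL; under eq_bigr do rewrite count_expect_exp_tests // big_distrr.
rewrite exchange_big /=; apply: ler_sum => i _.
under eq_bigr do rewrite big_distrr.
rewrite exchange_big /= [leRHS]big_seq [leLHS]big_seq; apply: ler_sum => cz czL /=.
have [c0 z0] := hL i cz czL; have /andP[pi0 pi1] := distr_bounds i dp.
under eq_bigr do rewrite mulrCA.
rewrite -big_distrr /= ler_wpM2l //.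
have := poisson_partial_pgf_le K m0 (_ : 0 <= 1 + p i * (cz.2 - 1)).
rewrite addrC addrK; apply; rewrite mulrBr mulr1.
by have := mulr_ge0 pi0 z0; lra.
Qed.

Lemma prob_poi2_le_exp_tests (p q : 'I_n -> R) (m1 m2 : R)
    (E : ('I_n -> nat) -> ('I_n -> nat) -> bool) (LX LY : 'I_n -> seq (R * R)) :
  is_distr p -> is_distr q -> 0 <= m1 -> 0 <= m2 -> nonneg_tests LX -> nonneg_tests LY ->
  (forall X Y, (E X Y)%:R <= exp_tests LX X + exp_tests LY Y) ->
  (prob_poi2 p q m1 m2 E <=
     (exp_tests_poisson_mean m1 p LX + exp_tests_poisson_mean m2 q LY)%:E)%E.
Proof.
move=> dp dq m10 m20 hX hY hE.
apply: prob_poi2_le_split hE _ _ => // [X|Y|K|K]; rewrite ?exp_tests_ge0 //.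
  exact: poisson_partial_exp_tests_le.
exact: poisson_partial_exp_tests_le.
Qed.

End ExponentialTests.

Section ChernoffTests.
Context {R : realType}.

Lemma expR_quarter_le : expR (1/4 : R) <= 4/3.
Proof.
have := expR_ge1Dx (- (1/4) : R); have := expRxMexpNx_1 (1/4 : R).
have := expR_gt0 (1/4 : R); nra.
Qed.

Lemma expRN1_le : expR (-1 : R) <= 4/9.
Proof.
have h := expR_ge1Dx (1/2 : R).
have e1 : expR (1 : R) = expR (1/2) * expR (1/2) by rewrite -expRD; congr expR; lra.
have E1 : 9/4 <= expR (1 : R) by rewrite e1; have := expR_gt0 (1/2 : R); nra.
have := expRxMexpNx_1 (1 : R); have := expR_gt0 (-1 : R); nra.
Qed.

Lemma expR_quarter_pow_ge1 (a : R) (x : nat) : a <= x%:R ->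
  1 <= expR (- (a / 4)) * expR (1/4) ^+ x.
Proof. by move=> ax; rewrite -expRM_natr -expRD -[leLHS]expR0 ler_expR; lra. Qed.

Lemma expRN1_pow_ge1 (a : R) (x : nat) : x%:R <= a -> 1 <= expR a * expR (-1) ^+ x.
Proof. by move=> ax; rewrite -expRM_natr -expRD -[leLHS]expR0 ler_expR; lra. Qed.

(* With e^(1/4) - 1 <= 1/3 the exponent is at most -a/4 + a/6 = -a/12. *)
Lemma chernoff_upper_le (L a m pi : R) : 0 <= L -> 36 * L <= a -> 0 <= m -> 0 <= pi ->
  m * pi <= a / 2 ->
  expR (- (a / 4)) * expR (m * (pi * (expR (1/4) - 1))) <= expR (- (3 * L)).
Proof.
move=> L0 La m0 p0 hmp; rewrite -expRD ler_expR mulrA.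
have : m * pi * (expR (1/4) - 1) <= m * pi * (1/3).
  by apply: ler_wpM2l; rewrite ?mulr_ge0 //; have := expR_quarter_le; lra.
lra.
Qed.

(* With e^(-1) - 1 <= -5/9 the exponent is at most a - 10a/9 = -a/9. *)
Lemma chernoff_lower_le (L a m pi : R) : 0 <= L -> 27 * L <= a ->
  2 * a <= m * pi ->
  expR a * expR (m * (pi * (expR (-1) - 1))) <= expR (- (3 * L)).
Proof.
move=> L0 La hmp; rewrite -expRD ler_expR mulrA.
have : m * pi * (expR (-1) - 1) <= m * pi * (- (5/9)).
  by apply: ler_wpM2l; [lra | have := expRN1_le; lra].
lra.
Qed.

(* Each pair [(c, z)] stands for the test [c * z ^ x]; the coefficient carries
   the indicator of the side of a threshold on which the true probability [pi]
   lies, and the test is at least [1] when the empirical frequency [x / m]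
   lands on the wrong side of the corresponding threshold. *)
Definition chernoff_tests (b b' m pi : R) : seq (R * R) :=
 [:: (expR (- (b * m / 4)) * (pi <= b / 2)%R%:R, expR (1/4));
     (expR (- (b' * m / 4)) * (pi < b' / 2)%R%:R, expR (1/4));
     (expR (b * m) * (2 * b < pi)%R%:R, expR (-1));
     (expR (b' * m) * (2 * b' <= pi)%R%:R, expR (-1))].

Definition freq_consistent (b b' m pi : R) (x : nat) : Prop :=
  [/\ pi <= b / 2 -> x%:R / m <= b, pi < b' / 2 -> x%:R / m < b',
      2 * b < pi -> b < x%:R / m & 2 * b' <= pi -> b' <= x%:R / m].

Lemma chernoff_tests_nonneg b b' m pi cz :
  cz \in chernoff_tests b b' m pi -> 0 <= cz.1 /\ 0 <= cz.2.
Proof. by rewrite !inE => /or4P[] /eqP -> /=; rewrite !mulr_ge0 ?expR_ge0 ?ler0n. Qed.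

Lemma sum_exp_tests_ge1 (L : seq (R * R)) cz (x : nat) :
  (forall cz, cz \in L -> 0 <= cz.1 /\ 0 <= cz.2) -> cz \in L ->
  1 <= cz.1 * cz.2 ^+ x -> 1 <= \sum_(cz <- L) cz.1 * cz.2 ^+ x.
Proof.
move=> hL czL h1; have term0 y : y \in L -> 0 <= y.1 * y.2 ^+ x.
  by move=> /hL[c0 z0]; rewrite mulr_ge0 ?exprn_ge0.
rewrite (perm_big _ (perm_to_rem czL)) big_cons /=.
apply: le_trans h1 _; rewrite lerDl big_seq sumr_ge0 // => y /mem_rem.
exact: term0.
Qed.

Lemma freq_consistent_of_chernoff_tests b b' m pi (x : nat) : 0 < m ->
  \sum_(cz <- chernoff_tests b b' m pi) cz.1 * cz.2 ^+ x < 1 ->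
  freq_consistent b b' m pi x.
Proof.
move=> m0 hT; set T := chernoff_tests b b' m pi.
have test_lt1 i : (i < 4)%N -> (nth (0, 0) T i).1 * (nth (0, 0) T i).2 ^+ x < 1.
  move=> ilt; rewrite ltNge; apply: (contraTN _ hT) => h1.
  rewrite -leNgt; apply: sum_exp_tests_ge1 h1; first exact: chernoff_tests_nonneg.
  exact: mem_nth.
split=> c.
- have := test_lt1 0%N isT; rewrite /= c mulr1 ler_pdivrMr // => h.
  by rewrite leNgt; apply: contraTN h => hx; rewrite -leNgt expR_quarter_pow_ge1 // ltW.
- have := test_lt1 1%N isT; rewrite /= c mulr1 ltr_pdivrMr // => h.
  by rewrite ltNge; apply: contraTN h => hx; rewrite -leNgt expR_quarter_pow_ge1.
- have := test_lt1 2%N isT; rewrite /= c mulr1 ltr_pdivlMr // => h.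
  by rewrite ltNge; apply: contraTN h => hx; rewrite -leNgt expRN1_pow_ge1.
- have := test_lt1 3%N isT; rewrite /= c mulr1 ler_pdivlMr // => h.
  by rewrite leNgt; apply: contraTN h => hx; rewrite -leNgt expRN1_pow_ge1 // ltW.
Qed.

Lemma mulr_natb_le (c : bool) (a e d : R) : 0 <= d -> (c -> a * e <= d) ->
  a * c%:R * e <= d.
Proof. by case: c => d0 h; rewrite ?mulr1 ?h // mulr0 mul0r. Qed.

Lemma chernoff_tests_poisson_le (L b b' m pi : R) :
  0 <= L -> 36 * L <= b' * m -> b' <= b -> 0 <= m -> 0 <= pi ->
  \sum_(cz <- chernoff_tests b b' m pi) cz.1 * expR (m * (pi * (cz.2 - 1)))
    <= 4 * expR (- (3 * L)).
Proof.
move=> L0 hb' bb m0 p0; have hb : 36 * L <= b * m by have := ler_wpM2r m0 bb; lra.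
set e := expR (- (3 * L)); have e0 : 0 <= e by exact: expR_ge0.
rewrite /chernoff_tests !big_cons big_nil addr0 /= (_ : 4 * e = e + (e + (e + e))); last by ring.
apply: lerD; [|apply: lerD; [|apply: lerD]]; apply: mulr_natb_le => // c.
- by apply: chernoff_upper_le => //; have := ler_wpM2l m0 c; lra.
- by apply: chernoff_upper_le => //; have := ler_wpM2l m0 (ltW c); lra.
- by apply: chernoff_lower_le; [| lra | have := ler_wpM2l m0 (ltW c); lra].
- by apply: chernoff_lower_le; [| lra | have := ler_wpM2l m0 c; lra].
Qed.

End ChernoffTests.

Section Faithfulness.
Context {R : realType} {n : nat}.
Variables (p q : 'I_n -> R) (m1 m2 b b' : R).

Lemma faithful_of_freq_consistent (X Y : 'I_n -> nat) :
  (forall i, freq_consistent b b' m1 (p i) (X i) /\ freq_consistent b b' m2 (q i) (Y i)) ->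
  [&& faithfulB p q b (setB X Y m1 m2 b),
      faithfulM p q b b' (setM X Y m1 m2 b b')
    & faithfulH p q b' (setH X Y m1 m2 b b')].
Proof.
move=> F; apply/and3P; split.
- apply/forallP => i; apply/implyP; rewrite !inE => hB.
  have [[f1 _ _ _] [g1 _ _ _]] := F i.
  case/orP: hB => hB; apply/orP.
    by left; rewrite ltNge; apply/negP => /f1; rewrite leNgt hB.
  by right; rewrite ltNge; apply/negP => /g1; rewrite leNgt hB.
- apply/forallP => i; apply/implyP; rewrite !inE => /andP[hl hu].
  have [[_ f2 f3 _] [_ g2 g3 _]] := F i.
  apply/andP; split.
    rewrite leNgt; apply/negP; rewrite gt_max => /andP[pl ql].
    move: hl; rewrite le_max => /orP[] h.
      by have := f2 pl; rewrite ltNge h.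
    by have := g2 ql; rewrite ltNge h.
  rewrite leNgt; apply/negP; rewrite lt_max => /orP[] h.
    by move: hu; rewrite ge_max => /andP[hu _]; have := f3 h; rewrite ltNge hu.
  by move: hu; rewrite ge_max => /andP[_ hu]; have := g3 h; rewrite ltNge hu.
- apply/forallP => i; apply/implyP; rewrite !inE negb_or => /andP[nB nM].
  have [[_ _ _ f4] [_ _ _ g4]] := F i.
  move: nB nM; rewrite negb_or -!leNgt => /andP[bX bY] nM.
  apply/andP; split; rewrite ltNge; apply/negP => h; move: nM; apply/negP; rewrite negbK.
    by rewrite ge_max bX bY le_max (f4 h).
  by rewrite ge_max bX bY le_max (g4 h) orbT.
Qed.

Lemma not_faithful_le_chernoff_tests (X Y : 'I_n -> nat) : 0 < m1 -> 0 < m2 ->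
  (~~ [&& faithfulB p q b (setB X Y m1 m2 b),
          faithfulM p q b b' (setM X Y m1 m2 b b')
        & faithfulH p q b' (setH X Y m1 m2 b b')])%:R
  <= exp_tests (fun i => chernoff_tests b b' m1 (p i)) X +
     exp_tests (fun i => chernoff_tests b b' m2 (q i)) Y.
Proof.
move=> m10 m20.
have tests0 m (pi : 'I_n -> R) : nonneg_tests (fun i => chernoff_tests b b' m (pi i)).
  by move=> i cz /chernoff_tests_nonneg.
have W0 := addr_ge0 (exp_tests_ge0 X (tests0 m1 p)) (exp_tests_ge0 Y (tests0 m2 q)).
case: and3P => [|faithless]; first by rewrite mulr0n.
rewrite leNgt; apply/negP => hW; apply/faithless/and3P.
apply: faithful_of_freq_consistent => i; split; apply: freq_consistent_of_chernoff_tests => //.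
  apply: le_lt_trans hW; apply: le_trans (exp_tests_ge_coord X i (tests0 m1 p)) _.
  by rewrite lerDl exp_tests_ge0.
apply: le_lt_trans hW; apply: le_trans (exp_tests_ge_coord Y i (tests0 m2 q)) _.
by rewrite lerDr exp_tests_ge0.
Qed.

End Faithfulness.

Lemma cvg_natr_mul_div_sqr {R : realType} (c : R) :
  (n%:R * (c / n%:R ^+ 2)) @[n --> \oo] --> 0.
Proof.
rewrite -cvg_shiftS.
have -> : [sequence (n.+1)%:R * (c / (n.+1)%:R ^+ 2)]_n = (fun n => c * @harmonic R n).
  by apply/funext => k /=; field; rewrite addrC natr1 pnatr_eq0.
have H := cvgMl_tmp (a := c) (@cvg_harmonic R); rewrite mulr0 in H; exact: H.
Qed.

Lemma expRN3_ln {R : realType} (x : R) : 0 < x -> expR (- (3 * ln x)) = (x ^+ 3)^-1.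
Proof. by move=> x0; rewrite expRN expRM_natl lnK. Qed.

Theorem lemma7 (R : realType) :
  exists f : nat -> R,
    ((n%:R * f n) @[n --> \oo] --> (0 : R)) /\
    forall (n : nat) (p q : 'I_n -> R) (eps m1 m2 : R),
      (0 < n)%N -> is_distr p -> is_distr q ->
      0 < eps -> eps <= 1 -> 0 < m2 -> m2 <= m1 ->
      (prob_poi2 p q m1 m2
         (fun X Y => ~~ all_faithful p q eps m1 m2 X Y) <= (f n)%:E)%E.
Proof.
exists (fun n => 8 / n%:R ^+ 2); split; first exact: cvg_natr_mul_div_sqr.
move=> n p q eps m1 m2 n0 dp dq e0 e1 m20 m21.
set L := ln (n%:R : R); set b := 256 * L / (eps ^+ 2 * m2); set b' := 256 * L / m2.
have L0 : 0 <= L by rewrite ln_ge0 // ler1n.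
have m10 : 0 < m1 := lt_le_trans m20 m21.
have b'0 : 0 <= b' by rewrite divr_ge0 ?mulr_ge0 // ltW.
have bb : b' <= b.
  have -> : b = b' / eps ^+ 2 by rewrite /b /b'; field; rewrite ?gt_eqF.
  by rewrite ler_peMr // invf_ge1 ?exprn_gt0 // expr_le1 // ltW.
have hm m : m2 <= m -> 36 * L <= b' * m.
  move=> hm2; have := ler_wpM2l b'0 hm2.
  have : b' * m2 = 256 * L by rewrite /b' divfK // gt_eqF.
  lra.
have [p0 q0] := (fun i => distr_bounds i dp, fun i => distr_bounds i dq).
apply: le_trans (prob_poi2_le_exp_tests (LX := fun i => chernoff_tests b b' m1 (p i))
  (LY := fun i => chernoff_tests b b' m2 (q i)) dp dq (ltW m10) (ltW m20) _ _ _) _.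
- by move=> i cz /chernoff_tests_nonneg.
- by move=> i cz /chernoff_tests_nonneg.
- by move=> X Y; exact: not_faithful_le_chernoff_tests.
rewrite lee_fin -big_split /=; apply: le_trans (ler_sum _ (fun i _ => lerD
  (chernoff_tests_poisson_le L0 (hm _ m21) bb (ltW m10) (andP (p0 i)).1)
  (chernoff_tests_poisson_le L0 (hm _ (lexx m2)) bb (ltW m20) (andP (q0 i)).1))) _.
rewrite sumr_const card_ord expRN3_ln ?ltr0n // -mulr_natl le_eqVlt; apply/orP; left.
by apply/eqP; field; rewrite pnatr_eq0 -lt0n.
Qed.
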